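(* Let $G$ be a connected graph with no isolated vertices. If either (a) $\gamma_t(G)=\gamma_c(G)$, or (b) $\gamma_t(G)=\gamma_c(G)-1$, then $$\gamma_t(G) \ge \left\lceil \frac{3\gamma(G)+2\gamma_c(G)}{6}\right\rceil.$$
   Context: All graphs are finite, simple and undirected. A set $S\subseteq V(G)$ is a dominating set if every vertex not in $S$ is adjacent to some vertex of $S$; $\gamma(G)$ is the minimum size of a dominating set. A set $S$ is a total dominating set if every vertex of $G$ (including those in $S$) is adjacent to some vertex of $S$; $\gamma_t(G)$ is the minimum size of a total dominating set. A set $S$ is a connected dominating set if it is dominating and the subgraph induced by $S$ is connected; $\gamma_c(G)$ is the minimum size of a connected dominating set. *)

From mathcomp Require Import all_boot.
Set Implicit Arguments. Unset Strict Implicit. Unset Printing Implicit Defensive.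

Definition simple_graph (T : finType) (e : rel T) : Prop :=
  symmetric e /\ irreflexive e.

Definition graph_connected (T : finType) (e : rel T) : Prop :=
  forall x y : T, connect e x y.

Definition no_isolated (T : finType) (e : rel T) : Prop :=
  forall x : T, exists y : T, e x y.

Definition dominating (T : finType) (e : rel T) (S : {set T}) : bool :=
  [forall v, (v \in S) || [exists u in S, e u v]].

Definition total_dominating (T : finType) (e : rel T) (S : {set T}) : bool :=
  [forall v, [exists u in S, e u v]].

Definition induced_rel (T : finType) (e : rel T) (S : {set T}) : rel T :=
  [rel x y | [&& x \in S, y \in S & e x y]].

Definition connected_dominating (T : finType) (e : rel T) (S : {set T}) : bool :=
  dominating e S && [forall x in S, forall y in S, connect (induced_rel e S) x y].

(* minimum cardinality of a set with property P; the default #|T| is only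
   attained when no such set is smaller (the full vertex set has the
   property under the theorem's hypotheses) *)
Definition min_card (T : finType) (P : {set T} -> bool) : nat :=
  \big[minn/#|T|]_(S : {set T} | P S) #|S|.

Definition gamma (T : finType) (e : rel T) := min_card (dominating e).
Definition gamma_t (T : finType) (e : rel T) := min_card (total_dominating e).
Definition gamma_c (T : finType) (e : rel T) := min_card (connected_dominating e).

From mathcomp Require Import all_boot.
From mathcomp Require Import zify.

(* A total dominating set dominates, so [gamma <= gamma_t]; without isolated
   vertices every vertex has a neighbour which itself has a neighbour, so
   [gamma_t >= 2]; and the hypothesis gives [gamma_c <= gamma_t + 1].  Hence
   [3 gamma + 2 gamma_c + 5 <= 5 gamma_t + 7 < 6 (gamma_t + 1)]. *)

Section MinCard.

Variables (T : finType) (P : {set T} -> bool).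

Lemma min_card_le S : P S -> min_card P <= #|S|.
Proof.
move=> PS; rewrite /min_card.
have : S \in index_enum {set T} by rewrite mem_index_enum.
elim: (index_enum _) => [//|A r IH]; rewrite big_cons inE.
case/orP => [/eqP <-|Sr]; first by rewrite PS geq_minl.
case: (P A); last exact: IH.
by rewrite geq_min IH // orbT.
Qed.

Lemma min_card_le_card : min_card P <= #|T|.
Proof.
rewrite /min_card; elim/big_ind: _ => //.
- by move=> a b ha _; rewrite geq_min ha.
- by move=> S _; exact: max_card.
Qed.

Lemma leq_min_card n :
  n <= #|T| -> (forall S, P S -> n <= #|S|) -> n <= min_card P.
Proof.
move=> nT nS; rewrite /min_card; elim/big_ind: _ => //.
by move=> a b ha hb; rewrite leq_min ha hb.
Qed.

End MinCard.

Lemma min_card_sub (T : finType) (P Q : {set T} -> bool) :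
  (forall S, P S -> Q S) -> min_card Q <= min_card P.
Proof.
move=> PQ; apply: leq_min_card; first exact: min_card_le_card.
by move=> S /PQ; exact: min_card_le.
Qed.

Section TotalDomination.

Variables (T : finType) (e : rel T).

Lemma total_dominating_dominating S : total_dominating e S -> dominating e S.
Proof. by move=> /forallP tdS; apply/forallP => v; rewrite tdS orbT. Qed.

Lemma gamma_le_gamma_t : gamma e <= gamma_t e.
Proof. exact/min_card_sub/total_dominating_dominating. Qed.

Lemma total_dominating_setT :
  symmetric e -> no_isolated e -> total_dominating e [set: T].
Proof.
move=> sym noiso; apply/forallP => v; case: (noiso v) => y evy.
by apply/existsP; exists y; rewrite inE sym.
Qed.

Lemma total_dominating_card_ge2 S :
  irreflexive e -> 0 < #|T| -> total_dominating e S -> 1 < #|S|.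
Proof.
move=> irr /card_gt0P [x _] /forallP tdS.
case/existsP: (tdS x) => u /andP [uS _].
case/existsP: (tdS u) => w /andP [wS ewu].
have nwu : w != u by apply: contraTneq ewu => ->; rewrite irr.
by rewrite (cardD1 u) uS (cardD1 w) !inE nwu wS.
Qed.

Lemma gamma_t_ge2 :
  simple_graph e -> 0 < #|T| -> no_isolated e -> 1 < gamma_t e.
Proof.
move=> [sym irr] T0 noiso; apply: leq_min_card => [|S].
  by rewrite -cardsT; apply: total_dominating_card_ge2 (total_dominating_setT _ _).
exact: total_dominating_card_ge2.
Qed.

End TotalDomination.

Lemma domination_bound_arith g c t :
  1 < t -> g <= t -> c <= t.+1 -> (3 * g + 2 * c + 5) %/ 6 <= t.
Proof. lia. Qed.

Theorem theorem2p8 (T : finType) (e : rel T) :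
  simple_graph e -> 0 < #|T| -> graph_connected e -> no_isolated e ->
  (gamma_t e = gamma_c e \/ gamma_t e = (gamma_c e).-1) ->
  (3 * gamma e + 2 * gamma_c e + 5) %/ 6 <= gamma_t e.
Proof.
move=> simple T0 _ noiso gamma_c_t.
apply: domination_bound_arith.
- exact: gamma_t_ge2.
- exact: gamma_le_gamma_t.
- by case: gamma_c_t => ->; lia.
Qed.
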